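(* Let $1\le r^{\star}\le r<n$, let $u_{0},u_{1},\dots,u_{n-1}$ be an orthonormal basis of $\mathbb{R}^{n}$, let $q=r-r^{\star}+1$ and $\kappa=1+2\sqrt{q}$. Let $\mathbf{H}$ be a real symmetric $n^{2}\times n^{2}$ matrix with $I\preceq\mathbf{H}\preceq\kappa I$ satisfying $$\mathbf{H}\,\mathrm{vec}\Big(\sqrt{q}u_{0}u_{0}^{T}+\sum_{i=1}^{q}u_{i}u_{i}^{T}\Big)=\kappa\,\mathrm{vec}\Big(\sqrt{q}u_{0}u_{0}^{T}+\sum_{i=1}^{q}u_{i}u_{i}^{T}\Big),$$ $$\mathbf{H}\,\mathrm{vec}\Big(\sqrt{q}u_{0}u_{0}^{T}-\sum_{i=1}^{q}u_{i}u_{i}^{T}\Big)=\mathrm{vec}\Big(\sqrt{q}u_{0}u_{0}^{T}-\sum_{i=1}^{q}u_{i}u_{i}^{T}\Big),$$ $$\mathbf{H}\,\mathrm{vec}(u_{0}u_{i}^{T}+u_{i}u_{0}^{T})=\kappa\,\mathrm{vec}(u_{0}u_{i}^{T}+u_{i}u_{0}^{T})\quad\text{for all }i\in\{1,\dots,r\}.$$ Let $\xi=\sqrt{1+\sqrt{q}}$, $\delta=1/(1+1/\sqrt{q})$, $Z=\xi\,[u_{0},u_{q+1},u_{q+2},\dots,u_{r}]\in\mathbb{R}^{n\times r^{\star}}$ and $X=[u_{1},\dots,u_{q},\xi u_{q+1},\dots,\xi u_{r}]\in\mathbb{R}^{n\times r}$. Then $(\delta,(1-\delta)\mathbf{H})$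 is a feasible point of the problem defining $\delta_{\mathrm{ub}}(X,Z)$; that is, $\mathbf{H}'=(1-\delta)\mathbf{H}$ satisfies $\mathbf{J}^{T}\mathbf{H}'\mathbf{e}=0$, $2I_{r}\otimes\mathrm{mat}(\mathbf{H}'\mathbf{e})+\mathbf{J}^{T}\mathbf{H}'\mathbf{J}\succeq0$, and $(1-\delta)I\preceq\mathbf{H}'\preceq(1+\delta)I$.
   Context: $\mathrm{vec}$ is column-stacking vectorization and $\mathrm{mat}$ its inverse; $\otimes$ is the Kronecker product with $\mathrm{vec}(AXB^{T})=(B\otimes A)\mathrm{vec}(X)$. For $X\in\mathbb{R}^{n\times r}$, $Z\in\mathbb{R}^{n\times r^{\star}}$: $\mathbf{e}=\mathrm{vec}(XX^{T}-ZZ^{T})$ and $\mathbf{J}\in\mathbb{R}^{n^{2}\times nr}$ satisfies $\mathbf{J}\,\mathrm{vec}(Y)=\mathrm{vec}(XY^{T}+YX^{T})$ for all $Y\in\mathbb{R}^{n\times r}$. $\delta_{\mathrm{ub}}(X,Z)$ is the minimum of $\delta$ over pairs $(\delta,\mathbf{H}')$ with $\mathbf{H}'$ real symmetric $n^{2}\times n^{2}$ satisfying $\mathbf{J}^{T}\mathbf{H}'\mathbf{e}=0$, $2I_{r}\otimes\mathrm{mat}(\mathbf{H}'\mathbf{e})+\mathbf{J}^{T}\mathbf{H}'\mathbf{J}\succeq0$, and $(1-\delta)I\preceq\mathbf{H}'\preceq(1+\delta)I$. *)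

From HB Require Import structures.
From mathcomp Require Import all_boot all_order all_algebra.
Set Implicit Arguments. Unset Strict Implicit. Unset Printing Implicit Defensive.
Import Order.TTheory GRing.Theory Num.Theory.
Local Open Scope ring_scope.

Section Defs.
Variable R : rcfType.

(* splitting an index of 'I_(m * n) into the pair (i, j) with value i*n + j,
   using the same enumeration as mathcomp's mxvec *)
Definition pidx (m n : nat) (k : 'I_(m * n)) : 'I_m * 'I_n :=
  enum_val (cast_ord (esym (mxvec_cast m n)) k).

(* column-stacking vectorization: vec A at index j*m + i is A i j *)
Definition vec (m n : nat) (A : 'M[R]_(m, n)) : 'cV[R]_(n * m) := (mxvec A^T)^T.

Definition mat (m n : nat) (v : 'cV[R]_(n * m)) : 'M[R]_(m, n) := (vec_mx v^T)^T.

(* Kronecker product B (x) A, so that vec (A X B^T) = kron B A *m vec X *)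
Definition kron (p q m n : nat) (B : 'M[R]_(p, q)) (A : 'M[R]_(m, n))
  : 'M[R]_(p * m, q * n) :=
  \matrix_(k, l) (B (pidx k).1 (pidx l).1 * A (pidx k).2 (pidx l).2).

(* positive semidefinite (symmetric) matrix; A >= B in the Loewner order is
   psd (A - B) *)
Definition psd (N : nat) (A : 'M[R]_N) : Prop :=
  A^T = A /\ forall x : 'cV[R]_N, 0 <= (x^T *m A *m x) 0 0.

End Defs.

(* The error [e] is [vec (S - (1 + sqrt q) u0 u0^T)] with [S] the sum of the
   [u_i u_i^T], [1 <= i <= q]; this is a combination of the two prescribed
   eigenvectors [sqrt q u0 u0^T +- S] of [H], whence [H e = - kappa vec (u0 u0^T)].
   As [u0] is orthogonal to the columns of [X], [vec (u0 u0^T)] is orthogonal to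
   the range of [J], so [J^T H' e = 0], and the first term of the curvature
   matrix evaluated at [vec Y] is [- 2 (1 + delta) |Y^T u0|^2].  The image
   [J vec Y] has a component [vec (u0 w^T + w u0^T)], [w = X Y^T u0], in the
   [kappa]-eigenspace of [H] spanned by the [vec (u0 u_i^T + u_i u0^T)], of squared
   norm [2 |w|^2 >= 2 |Y^T u0|^2] since [X^T X >= I]; hence
   [(1 - delta) (J vec Y)^T H (J vec Y) >= 2 (1 - delta) kappa |w|^2], and
   [(1 - delta) kappa = 1 + delta] closes the curvature bound as well as turning
   [I <= H <= kappa I] into the two Loewner bounds. *)

From HB Require Import structures.
From mathcomp Require Import all_boot all_order all_algebra.
From mathcomp Require Import ring lra zify.
Import Order.TTheory GRing.Theory Num.Theory.
Local Open Scope ring_scope.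

Set Implicit Arguments. Unset Strict Implicit.

Section Vectorization.
Variable R : rcfType.
Implicit Types m n p q : nat.

Fact vec_is_linear m n : linear (@vec R m n).
Proof. by move=> a A B; rewrite /vec !linearP. Qed.

HB.instance Definition _ m n :=
  GRing.isLinear.Build _ _ _ _ (@vec R m n) (@vec_is_linear m n).

Lemma vecK m n : cancel (@vec R m n) (@mat R m n).
Proof. by move=> A; rewrite /mat /vec trmxK mxvecK trmxK. Qed.

Lemma matK m n : cancel (@mat R m n) (@vec R m n).
Proof. by move=> v; rewrite /mat /vec trmxK vec_mxK trmxK. Qed.

Lemma vecE m n (A : 'M[R]_(m, n)) i j : vec A (mxvec_index j i) 0 = A i j.
Proof. by rewrite /vec !mxE mxvecE mxE. Qed.

Lemma pidxE m n (i : 'I_m) (j : 'I_n) : pidx (mxvec_index i j) = (i, j).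
Proof. by rewrite /pidx /mxvec_index cast_ordK enum_rankK. Qed.

Lemma sum_mxvec m n (F : 'I_(m * n) -> R) :
  \sum_k F k = \sum_i \sum_j F (mxvec_index i j).
Proof.
rewrite (reindex _ (curry_mxvec_bij _ _)) /= pair_bigA /=.
by apply: eq_bigr => -[i j].
Qed.

Lemma dot_vec m n (A B : 'M[R]_(m, n)) :
  ((vec A)^T *m vec B) 0 0 = \tr (A^T *m B).
Proof.
rewrite mxE sum_mxvec; apply: eq_bigr => j _.
rewrite mxE; apply: eq_bigr => i _.
by rewrite [(vec A)^T _ _]mxE !vecE mxE.
Qed.

Lemma mul_kron_vec p q m n (B : 'M[R]_(p, q)) (A : 'M[R]_(m, n)) X :
  kron B A *m vec X = vec (A *m X *m B^T).
Proof.
apply/matrixP => k i0; rewrite ord1; case/mxvec_indexP: k => j a.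
rewrite vecE mxE sum_mxvec [RHS]mxE; apply: eq_bigr => j' _.
rewrite [in RHS]mxE mulr_suml; apply: eq_bigr => b _.
by rewrite [kron _ _ _ _]mxE !pidxE vecE /= mxE; ring.
Qed.

Lemma trmx_kron p q m n (B : 'M[R]_(p, q)) (A : 'M[R]_(m, n)) :
  (kron B A)^T = kron B^T A^T.
Proof. by apply/matrixP => k l; rewrite !mxE. Qed.

End Vectorization.

Section Quadratic.
Variables (R : rcfType) (N : nat).
Implicit Types (A B H : 'M[R]_N) (x y p : 'cV[R]_N).

Lemma dotC x y : (x^T *m y) 0 0 = (y^T *m x) 0 0.
Proof. by rewrite -[LHS]trace_mx11 -mxtrace_tr trmx_mul trmxK trace_mx11. Qed.

Lemma dot_ge0 x : 0 <= (x^T *m x) 0 0.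
Proof. by rewrite mxE sumr_ge0 // => i _; rewrite mxE -expr2 sqr_ge0. Qed.

Lemma dot_eq0 x : (x^T *m x) 0 0 = 0 -> x = 0.
Proof.
rewrite mxE => /eqP; rewrite psumr_eq0 => [/allP x0|i _]; last first.
  by rewrite mxE -expr2 sqr_ge0.
apply/matrixP => i j; rewrite ord1 mxE.
have /implyP/(_ isT) := x0 i (mem_index_enum i).
by rewrite mxE mulf_eq0 orbb => /eqP.
Qed.

Lemma psd1 : psd (1%:M : 'M[R]_N).
Proof. by split=> [|x]; rewrite ?trmx1 // mulmx1 dot_ge0. Qed.

Lemma psdD A B : psd A -> psd B -> psd (A + B).
Proof.
move=> [sA qA] [sB qB]; split=> [|x]; first by rewrite linearD /= sA sB.
by rewrite mulmxDr mulmxDl -trace_mx11 mxtraceD !trace_mx11 addr_ge0.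
Qed.

Lemma psdZ a A : 0 <= a -> psd A -> psd (a *: A).
Proof.
move=> a0 [sA qA]; split=> [|x]; first by rewrite linearZ /= sA.
by rewrite -scalemxAr -scalemxAl mxE mulr_ge0.
Qed.

Lemma psd_quad_le A B x : psd (A - B) ->
  (x^T *m B *m x) 0 0 <= (x^T *m A *m x) 0 0.
Proof.
move=> [_ /(_ x)]; rewrite mulmxBr mulmxBl -trace_mx11 raddfB /=.
by rewrite !trace_mx11 subr_ge0.
Qed.

Lemma psd_eigen_quad_ge H k p y : psd H -> H *m p = k *: p ->
  (p^T *m y) 0 0 = (p^T *m p) 0 0 ->
  k * (p^T *m p) 0 0 <= (y^T *m H *m y) 0 0.
Proof.
move=> [sH qH] Hp pyp.
have pH : p^T *m H = k *: p^T by rewrite -sH -trmx_mul Hp linearZ.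
have pd : (p^T *m (y - p)) 0 0 = 0.
  by rewrite mulmxBr -trace_mx11 raddfB /= !trace_mx11 pyp subrr.
move: (y - p) pd (subrK p y) => d pd <-.
rewrite [(d + p)^T]linearD /= !mulmxDl !mulmxDr pH -!scalemxAl.
rewrite -[d^T *m H *m p]mulmxA Hp -scalemxAr -[X in _ <= X]trace_mx11.
rewrite !(mxtraceD, mxtraceZ) !trace_mx11 [(d^T *m p) 0 0]dotC pd.
by rewrite mulr0 !addr0 add0r lerDr qH.
Qed.

Lemma psd_diag_mx (d : 'rV[R]_N) :
  (forall i, 0 <= d 0 i) -> psd (diag_mx d).
Proof.
move=> d0; split=> [|x]; first exact: tr_diag_mx.
rewrite mxE sumr_ge0 // => i _; rewrite mxE.
rewrite (bigD1 i) //= big1 => [|j ji].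
  by rewrite addr0 !mxE eqxx mulr1n mulrAC -expr2 mulr_ge0 ?sqr_ge0.
by rewrite [diag_mx _ _ _]mxE (negbTE ji) mulr0n mulr0.
Qed.

End Quadratic.

Lemma one_sub_delta_ge0 (R : realFieldType) (t : R) :
  0 < t -> 0 <= 1 - 1 / (1 + 1 / t).
Proof.
move=> t_gt0; have -> : 1 - 1 / (1 + 1 / t) = (1 + t)^-1.
  by field; rewrite !gt_eqF //; lra.
by rewrite invr_ge0; lra.
Qed.

Lemma one_sub_delta_mul_kappa (R : realFieldType) (t : R) : 0 < t ->
  (1 - 1 / (1 + 1 / t)) * (1 + 2 * t) = 1 + 1 / (1 + 1 / t).
Proof. by move=> t_gt0; field; rewrite !gt_eqF //; lra. Qed.

Lemma scale_plus_minus (R : pzRingType) (V : lmodType R) (a b c : R) (x y : V) :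
  a *: (c *: x + y) + b *: (c *: x - y) = ((a + b) * c) *: x + (a - b) *: y.
Proof.
by rewrite scalerBr scalerDr !scalerA addrACA -scalerDl -scalerBl mulrDl.
Qed.

Section MatrixProducts.
Variable R : rcfType.

Lemma mxE_row_col m n p (A : 'M[R]_(m, n)) (B : 'M[R]_(n, p)) i j :
  (A *m B) i j = (row i A *m col j B) 0 0.
Proof. by rewrite !mxE; apply: eq_bigr => k _; rewrite !mxE. Qed.

Lemma mulmx_tr_sum_col m n k (A : 'M[R]_(m, k)) (B : 'M[R]_(n, k)) :
  A *m B^T = \sum_j col j A *m (col j B)^T.
Proof.
apply/matrixP => a b; rewrite !mxE summxE; apply: eq_bigr => j _.
by rewrite !mxE big_ord1 !mxE.
Qed.

End MatrixProducts.

Section SymmetrizedProducts.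
Variables (R : rcfType) (n : nat).

Lemma trmx_sym_mul k (A B : 'M[R]_(n, k)) :
  (A *m B^T + B *m A^T)^T = A *m B^T + B *m A^T.
Proof. by rewrite linearD /= !trmx_mul !trmxK addrC. Qed.

Lemma dot_vec_sym_outer (x w : 'cV[R]_n) (M : 'M[R]_n) : M^T = M ->
  ((vec (x *m w^T + w *m x^T))^T *m vec M) 0 0 = 2 * (w^T *m M *m x) 0 0.
Proof.
move=> sM; rewrite dot_vec trmx_sym_mul mulmxDl mxtraceD.
rewrite -!mulmxA !(mxtrace_mulC x) !(mxtrace_mulC w) !mulmxA !trace_mx11.
rewrite -[(x^T *m M *m w) 0 0]trace_mx11 -mxtrace_tr !trmx_mul trmxK sM.
by rewrite mulmxA trace_mx11 mulr_natl mulr2n.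
Qed.

Lemma norm_vec_sym_outer (x w : 'cV[R]_n) : x^T *m x = 1%:M -> w^T *m x = 0 ->
  ((vec (x *m w^T + w *m x^T))^T *m vec (x *m w^T + w *m x^T)) 0 0
    = 2 * (w^T *m w) 0 0.
Proof.
move=> xx wx; rewrite dot_vec_sym_outer ?trmx_sym_mul // mulmxDr mulmxDl.
by rewrite mulmxA wx !mul0mx add0r -!mulmxA xx mulmx1.
Qed.

End SymmetrizedProducts.

Section Certificate.
Variables (R : rcfType) (n r : nat) (X : 'M[R]_(n, r)) (x : 'cV[R]_n).
Variables (H : 'M[R]_(n * n)) (kappa : R) (J : 'M[R]_(n * n, r * n)).
Hypotheses (x_unit : x^T *m x = 1%:M) (x_orthX : x^T *m X = 0).
Hypotheses (XtX_ge1 : psd (X^T *m X - 1%:M)) (H_psd : psd H).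
Hypothesis kappa_ge0 : 0 <= kappa.
Hypothesis H_eigen : forall b : 'cV[R]_r, let w := X *m b in
  H *m vec (x *m w^T + w *m x^T) = kappa *: vec (x *m w^T + w *m x^T).
Hypothesis J_vec :
  forall Y : 'M[R]_(n, r), J *m vec Y = vec (X *m Y^T + Y *m X^T).

Let Xt_x : X^T *m x = 0.
Proof. by rewrite -[x]trmxK -trmx_mul x_orthX trmx0. Qed.

Lemma trJ_vec_outer : J^T *m vec (x *m x^T) = 0.
Proof.
set v := J^T *m _; apply: dot_eq0.
rewrite {2}/v mulmxA -trmx_mul -[v]matK J_vec dot_vec mulmxA mxtrace_mulC.
rewrite linearD /= !trmx_mul !trmxK mulmxDl mulmxDr -[mat _ *m _ *m _]mulmxA Xt_x.
by rewrite !mulmxA x_orthX !(mulmx0, mul0mx) addr0 mxtrace0.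
Qed.

Lemma JtHJ_quad_ge (Y : 'M[R]_(n, r)) :
  2 * kappa * ((Y^T *m x)^T *m (Y^T *m x)) 0 0
    <= ((vec Y)^T *m (J^T *m H *m J) *m vec Y) 0 0.
Proof.
have -> : (vec Y)^T *m (J^T *m H *m J) *m vec Y =
    (vec (X *m Y^T + Y *m X^T))^T *m H *m vec (X *m Y^T + Y *m X^T).
  by rewrite -J_vec trmx_mul !mulmxA.
move Eb : (Y^T *m x) => b; move Ew : (X *m b) => w.
have wx : w^T *m x = 0 by rewrite -Ew trmx_mul -mulmxA Xt_x mulmx0.
have pm : ((vec (x *m w^T + w *m x^T))^T *m vec (X *m Y^T + Y *m X^T)) 0 0
    = 2 * (w^T *m w) 0 0.
  rewrite dot_vec_sym_outer ?trmx_sym_mul // mulmxDr mulmxDl -!mulmxA Xt_x.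
  by rewrite Eb Ew !mulmx0 addr0.
have Hp : H *m vec (x *m w^T + w *m x^T) = kappa *: vec (x *m w^T + w *m x^T).
  by rewrite -Ew; exact: H_eigen.
have bw : (b^T *m b) 0 0 <= (w^T *m w) 0 0.
  by have := psd_quad_le b XtX_ge1; rewrite mulmx1 -Ew trmx_mul !mulmxA.
have pp := norm_vec_sym_outer x_unit wx.
have := psd_eigen_quad_ge H_psd Hp (etrans pm (esym pp)).
rewrite pp; have := ler_wpM2l kappa_ge0 bw; lra.
Qed.

Lemma certificate_feasible (c : R) (e : 'cV[R]_(n * n)) : 0 <= c ->
  H *m e = - kappa *: vec (x *m x^T) ->
  J^T *m (c *: H) *m e = 0
  /\ psd (2 *: kron 1%:M (mat (c *: H *m e)) + J^T *m (c *: H) *m J).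
Proof.
move=> c_ge0 He; have cHe : c *: H *m e = - (c * kappa) *: vec (x *m x^T).
  by rewrite -scalemxAl He scalerA mulrN.
split; first by rewrite -mulmxA cHe -scalemxAr trJ_vec_outer scaler0.
rewrite cHe -linearZ vecK; split.
  rewrite linearD /=; congr (_ + _).
    by rewrite linearZ /= trmx_kron trmx1 linearZ /= trmx_mul trmxK.
  by case: H_psd => sH _; rewrite !trmx_mul trmxK linearZ /= sH mulmxA.
move=> y; rewrite -(matK y); move: (mat y) => Y.
have kronY a : ((vec Y)^T *m kron 1%:M (a *: (x *m x^T)) *m vec Y) 0 0
    = a * ((Y^T *m x)^T *m (Y^T *m x)) 0 0.
  rewrite -mulmxA mul_kron_vec trmx1 mulmx1 dot_vec -scalemxAl -scalemxAr.
  rewrite mxtraceZ -[x *m x^T *m Y]mulmxA [Y^T *m (x *m _)]mulmxA.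
  by rewrite mxtrace_mulC trace_mx11 trmx_mul trmxK.
have -> : J^T *m (c *: H) *m J = c *: (J^T *m H *m J).
  by rewrite -scalemxAr -scalemxAl.
rewrite mulmxDr mulmxDl -!scalemxAr -!scalemxAl.
rewrite -trace_mx11 mxtraceD !mxtraceZ !trace_mx11 kronY.
have := ler_wpM2l c_ge0 (JtHJ_quad_ge Y); lra.
Qed.

End Certificate.

Section Construction.
Variables (R : rcfType) (n r rs : nat) (u : nat -> 'cV[R]_n).
Hypotheses (rs_gt0 : (1 <= rs)%N) (rs_le_r : (rs <= r)%N) (r_lt_n : (r < n)%N).
Hypothesis u_orthonormal : forall i j, (i < n)%N -> (j < n)%N ->
  (u i)^T *m u j = ((i == j)%:R)%:M.

Local Notation q := (r - rs + 1)%N.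
Local Notation s := (Num.sqrt (q%:R : R)).
Local Notation kappa := (1 + 2 * s).
Local Notation xi := (Num.sqrt (1 + s)).
Local Notation X := (\matrix_(a, j)
  (if (j < q)%N then u j.+1 a 0 else xi * u j.+1 a 0) : 'M[R]_(n, r)).
Local Notation Z := (\matrix_(a, j)
  (xi * u (if j == 0 :> nat then 0%N else (q + j)%N) a 0) : 'M[R]_(n, rs)).
Local Notation U0 := (u 0%N *m (u 0%N)^T).
Local Notation S := (\sum_(1 <= i < q.+1) u i *m (u i)^T).
Local Notation xscale j := (if (j < q)%N then 1 else xi).

Lemma u0_unit : (u 0%N)^T *m u 0%N = 1%:M.
Proof. by rewrite u_orthonormal ?eqxx // (leq_ltn_trans (leq0n r)). Qed.

Lemma sqrt_q_gt0 : 0 < s.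
Proof. by rewrite sqrtr_gt0 ltr0n addn1. Qed.

Lemma xi_sqr : xi ^+ 2 = 1 + s.
Proof. by rewrite sqr_sqrtr // addr_ge0 ?sqrtr_ge0. Qed.

Lemma col_X (j : 'I_r) : col j X = xscale j *: u j.+1.
Proof. by apply/colP => a; rewrite !mxE; case: ifP; rewrite ?mul1r. Qed.

Lemma col_Z (j : 'I_rs) :
  col j Z = xi *: u (if j == 0 :> nat then 0%N else (q + j)%N).
Proof. by apply/colP => a; rewrite !mxE. Qed.

Lemma u0_orthX : (u 0%N)^T *m X = 0.
Proof.
apply/matrixP => i j; rewrite ord1 mxE_row_col row_id col_X -scalemxAr.
rewrite u_orthonormal ?(leq_ltn_trans (leq0n r)) ?(leq_ltn_trans (ltn_ord j)) //.
by rewrite !mxE /= mul0rn mulr0.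
Qed.

Lemma XtX_sub1 : X^T *m X - 1%:M = diag_mx (\row_j (xscale j ^+ 2 - 1)).
Proof.
apply/matrixP => j k.
rewrite [LHS]mxE mxE_row_col -tr_col !col_X !linearZ /= -scalemxAl.
rewrite u_orthonormal ?(leq_ltn_trans (ltn_ord j)) ?(leq_ltn_trans (ltn_ord k)) //.
rewrite !mxE /= eqSS val_eqE; case: eqVneq => [<-|_].
  by rewrite !mulr1n mulr1 -expr2.
by rewrite !mulr0n !mulr0 subr0.
Qed.

Lemma XtX_ge1 : psd (X^T *m X - 1%:M).
Proof.
rewrite XtX_sub1; apply: psd_diag_mx => j; rewrite mxE subr_ge0.
by case: ifP; rewrite ?expr1n // xi_sqr lerDl sqrtr_ge0.
Qed.

Lemma XXt_sub_ZZt : X *m X^T - Z *m Z^T = S - (1 + s) *: U0.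
Proof.
pose T := \sum_(q.+1 <= i < r.+1) u i *m (u i)^T.
have XXt : X *m X^T = S + xi ^+ 2 *: T.
  rewrite mulmx_tr_sum_col.
  under eq_bigr do rewrite col_X linearZ /= -scalemxAl -scalemxAr scalerA -expr2.
  rewrite -(big_mkord xpredT (fun j => xscale j ^+ 2 *: (u j.+1 *m (u j.+1)^T))).
  rewrite (@big_cat_nat _ _ _ q) //=; last by clear -rs_gt0 rs_le_r; lia.
  rewrite /T !big_add1 /= scaler_sumr.
  by congr (_ + _); apply: eq_big_nat => i /andP[qi ilt];
    rewrite ?ilt ?expr1n ?scale1r // ltnNge qi.
have ZZt : Z *m Z^T = xi ^+ 2 *: (U0 + T).
  rewrite mulmx_tr_sum_col.
  under eq_bigr do rewrite col_Z linearZ /= -scalemxAl -scalemxAr scalerA -expr2.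
  rewrite -scaler_sumr; congr (_ *: _).
  rewrite -(big_mkord xpredT (fun j =>
    let i := if j == 0 then 0 else (q + j)%N in u i *m (u i)^T)).
  rewrite big_ltn // /T -{1}(add1n q) big_addn.
  have -> : (r.+1 - q = rs)%N by clear -rs_gt0 rs_le_r; lia.
  congr (_ + _); apply: eq_big_nat => i /andP[i_gt0 _].
  by rewrite (negbTE (lt0n_neq0 i_gt0)) addnC.
by rewrite XXt ZZt scalerDr opprD addrACA subrr addr0 xi_sqr.
Qed.

Lemma H_vec_error (H : 'M[R]_(n * n)) :
  H *m vec (s *: U0 + S) = kappa *: vec (s *: U0 + S) ->
  H *m vec (s *: U0 - S) = vec (s *: U0 - S) ->
  H *m vec (X *m X^T - Z *m Z^T) = - kappa *: vec U0.
Proof.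
move=> H_plus H_minus; have s_neq0 : s != 0 by rewrite gt_eqF ?sqrt_q_gt0.
pose a := - (2 * s)^-1.
have -> : X *m X^T - Z *m Z^T = a *: (s *: U0 + S) + (a * kappa) *: (s *: U0 - S).
  rewrite XXt_sub_ZZt scale_plus_minus addrC -scaleNr -[S in LHS]scale1r.
  (* [field] gets lost in the natural-number expression under the square
     root unless the square root is abstracted first. *)
  rewrite /a; move: s_neq0; set t := Num.sqrt _; clearbody t; move=> t_neq0.
  by congr (_ *: _ + _ *: _); field.
rewrite linearD !linearZ /= mulmxDr -!scalemxAr H_plus H_minus scalerA.
rewrite linearD linearB !linearZ /= scale_plus_minus subrr scale0r addr0.
rewrite /a; move: s_neq0; set t := Num.sqrt _; clearbody t; move=> t_neq0.
by congr (_ *: _); field.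
Qed.

Lemma mulmx_X (b : 'cV[R]_r) :
  X *m b = \sum_(j < r) (xscale j * b j 0) *: u j.+1.
Proof.
apply/colP => a; rewrite !mxE summxE; apply: eq_bigr => j _.
by rewrite !mxE; case: ifP => _; [rewrite mul1r mulrC | rewrite mulrAC].
Qed.

Lemma H_eigen_sym_outer (H : 'M[R]_(n * n)) :
  (forall i, (1 <= i <= r)%N ->
     H *m vec (u 0%N *m (u i)^T + u i *m (u 0%N)^T)
     = kappa *: vec (u 0%N *m (u i)^T + u i *m (u 0%N)^T)) ->
  forall b : 'cV[R]_r, let w := X *m b in
  H *m vec (u 0%N *m w^T + w *m (u 0%N)^T)
  = kappa *: vec (u 0%N *m w^T + w *m (u 0%N)^T).
Proof.
move=> H_u b /=; rewrite mulmx_X [(\sum_j _)^T]linear_sum /=.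
rewrite mulmx_sumr mulmx_suml -big_split /= linear_sum mulmx_sumr scaler_sumr /=.
apply: eq_bigr => j _; rewrite linearZ /= -scalemxAr -scalemxAl -scalerDr.
by rewrite !linearZ /= H_u ?ltn_ord // scalerCA.
Qed.

End Construction.

Theorem lemma26 (R : rcfType) (n r rs : nat)
  (hrs : (1 <= rs)%N) (hrsr : (rs <= r)%N) (hrn : (r < n)%N)
  (u : nat -> 'cV[R]_n)
  (hu : forall i j, (i < n)%N -> (j < n)%N ->
          (u i)^T *m u j = ((i == j)%:R)%:M)
  (H : 'M[R]_(n * n))
  (hHsym : H^T = H)
  (hHlo : psd (H - 1%:M))
  (hHhi : psd ((1 + 2 * Num.sqrt (r - rs + 1)%:R) *: 1%:M - H))
  (hH1 : let q := (r - rs + 1)%N in let kappa := 1 + 2 * Num.sqrt q%:R in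
         let M := Num.sqrt q%:R *: (u 0%N *m (u 0%N)^T)
                  + \sum_(1 <= i < q.+1) u i *m (u i)^T in
         H *m vec M = kappa *: vec M)
  (hH2 : let q := (r - rs + 1)%N in
         let M := Num.sqrt q%:R *: (u 0%N *m (u 0%N)^T)
                  - \sum_(1 <= i < q.+1) u i *m (u i)^T in
         H *m vec M = vec M)
  (hH3 : forall i, (1 <= i <= r)%N ->
         let kappa := 1 + 2 * Num.sqrt (r - rs + 1)%:R in
         let M := u 0%N *m (u i)^T + u i *m (u 0%N)^T in
         H *m vec M = kappa *: vec M) :
  let q := (r - rs + 1)%N in
  let xi := Num.sqrt (1 + Num.sqrt q%:R) in
  let delta := 1 / (1 + 1 / Num.sqrt q%:R) in
  let Z : 'M[R]_(n, rs) :=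
    \matrix_(a, j) (xi * u (if j == 0 :> nat then 0%N else (q + j)%N) a 0) in
  let X : 'M[R]_(n, r) :=
    \matrix_(a, j) (if (j < q)%N then u j.+1 a 0 else xi * u j.+1 a 0) in
  let e := vec (X *m X^T - Z *m Z^T) in
  let H' := (1 - delta) *: H in
  forall J : 'M[R]_(n * n, r * n),
  (forall Y : 'M[R]_(n, r), J *m vec Y = vec (X *m Y^T + Y *m X^T)) ->
  [/\ J^T *m H' *m e = 0,
      psd (2 *: kron (1%:M : 'M[R]_r) (mat (H' *m e)) + J^T *m H' *m J),
      psd (H' - (1 - delta) *: 1%:M)
    & psd ((1 + delta) *: 1%:M - H')].
Proof.
move=> q xi delta Z X e H' J J_vec.
have s_gt0 := sqrt_q_gt0 R r rs.
have c_ge0 := one_sub_delta_ge0 s_gt0.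
have H_psd : psd H by rewrite -(subrK 1%:M H); exact: psdD hHlo (psd1 _ _).
have kappa_ge0 : 0 <= 1 + 2 * Num.sqrt (q%:R : R).
  by rewrite addr_ge0 ?mulr_ge0 ?sqrtr_ge0.
have [JHe JHJ_psd] := certificate_feasible (u0_unit hrn hu)
  (u0_orthX rs hrn hu) (XtX_ge1 rs hrn hu) H_psd kappa_ge0
  (H_eigen_sym_outer hH3) J_vec c_ge0 (H_vec_error hrs hrsr hH1 hH2).
split => //; first by rewrite -scalerBr; exact: psdZ.
by rewrite -(one_sub_delta_mul_kappa s_gt0) -scalerA -scalerBr; exact: psdZ.
Qed.
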